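(* Let $p\geq 5$ be an odd integer. For any real number $x\geq 2$, \[ \left(\left(1-\frac{1}{4x}\right)^2+\frac{1}{8x^2}\right)^{-\frac1p-1}\left(1-\frac{1}{4x}\right)+\left(\left(1+\frac{1}{4x}\right)^2+\frac{1}{8x^2}\right)^{-\frac1p-1}\left(1+\frac{1}{4x}\right)<2. \] *)

From Stdlib Require Import Reals Lra Lia.

(* With t = 1/(4x) and a = 1/p, the bases are A = 1 - 2t + 3t^2 and B = 1 + 2t + 3t^2, and
   y^(-a-1) = y^-1 (y^-1)^a. Bernoulli's inequality bounds the p-th root (y^-1)^a by the
   tangent line 1 + a (y^-1 - 1), and after clearing denominators the resulting rational
   bound is 2 minus t^2 times a polynomial with positive coefficients as soon as a <= 1/3. *)
From Stdlib Require Import Reals Arith.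
From Stdlib Require Import Lra Lia Psatz.
Open Scope R_scope.

Lemma bernoulli_pow (n : nat) (h : R) : -1 <= h -> 1 + INR n * h <= (1 + h) ^ n.
Proof.
  intro Hh. induction n as [|n IH].
  - simpl. lra.
  - rewrite S_INR. simpl.
    assert (0 <= 1 + h) by lra.
    assert (0 <= INR n) by apply pos_INR.
    nra.
Qed.

Lemma Rpower_inv_nat_le (z : R) (n : nat) : 0 < z ->
  Rpower z (1 / INR n) <= 1 + 1 / INR n * (z - 1).
Proof.
  intro Hz.
  destruct (Nat.eq_0_gt_0_cases n) as [->|Hn].
  { (* [1 / 0 = 0] in Rocq, so both sides are 1. *)
    rewrite Rdiv_0_r, Rpower_O by exact Hz. lra. }
  assert (Hn' : 1 <= INR n) by (apply (le_INR 1); exact Hn).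
  set (w := Rpower z (1 / INR n)).
  assert (Hw : 0 < w) by apply exp_pos.
  assert (Hwn : w ^ n = z).
  { rewrite <- Rpower_pow by exact Hw. unfold w. rewrite Rpower_mult.
    replace (1 / INR n * INR n) with 1 by (field; lra).
    exact (Rpower_1 z Hz). }
  pose proof (bernoulli_pow n (w - 1) ltac:(lra)) as B.
  replace (1 + (w - 1)) with w in B by ring. rewrite Hwn in B.
  apply (Rmult_le_reg_r (INR n)); [lra|].
  replace ((1 + 1 / INR n * (z - 1)) * INR n) with (INR n + (z - 1)) by (field; lra).
  nra.
Qed.

Lemma Rpower_opp_sub1 (y a : R) : 0 < y -> Rpower y (- a - 1) = / y * Rpower (/ y) a.
Proof.
  intro Hy. unfold Rpower. rewrite ln_Rinv by exact Hy.
  replace ((- a - 1) * ln y) with (- ln y + a * - ln y) by ring.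
  rewrite exp_plus, exp_Ropp, exp_ln by exact Hy. reflexivity.
Qed.

Lemma Rpower_opp_inv_nat_sub1_le (y s : R) (n : nat) : 0 < y -> 0 <= s ->
  Rpower y (- (1 / INR n) - 1) * s <= / y * (1 + 1 / INR n * (/ y - 1)) * s.
Proof.
  intros Hy Hs.
  rewrite Rpower_opp_sub1 by exact Hy.
  apply Rmult_le_compat_r; [exact Hs|].
  apply Rmult_le_compat_l; [left; apply Rinv_0_lt_compat; exact Hy|].
  apply Rpower_inv_nat_le, Rinv_0_lt_compat, Hy.
Qed.

Lemma tangent_bound_lt2 (t a : R) : 0 < t -> 0 <= a <= 1/3 ->
  let A := 1 - 2 * t + 3 * t ^ 2 in let B := 1 + 2 * t + 3 * t ^ 2 in
  / A * (1 + a * (/ A - 1)) * (1 - t) + / B * (1 + a * (/ B - 1)) * (1 + t) < 2.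
Proof.
  intros Ht Ha A B.
  assert (HA : 0 < A) by (unfold A; nra).
  assert (HB : 0 < B) by (unfold B; nra).
  assert (HAB : 0 < A * A * (B * B)) by (apply Rmult_lt_0_compat; apply Rmult_lt_0_compat; lra).
  assert (Gap : 2 * (A * A * (B * B))
      - ((1 - t) * (A + a * (1 - A)) * (B * B) + (1 + t) * (B + a * (1 - B)) * (A * A))
      = t ^ 2 * ((2 - 6 * a) + t ^ 2 * (22 + 28 * a) + t ^ 4 * (54 + 18 * a) + 162 * t ^ 6))
    by (unfold A, B; ring).
  assert (0 < t ^ 2) by (apply pow_lt; lra).
  assert (0 <= t ^ 4) by (apply pow_le; lra).
  assert (0 <= t ^ 6) by (apply pow_le; lra).
  assert (0 < (2 - 6 * a) + t ^ 2 * (22 + 28 * a) + t ^ 4 * (54 + 18 * a) + 162 * t ^ 6) by nra.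
  replace (/ A * (1 + a * (/ A - 1)) * (1 - t) + / B * (1 + a * (/ B - 1)) * (1 + t))
    with (((1 - t) * (A + a * (1 - A)) * (B * B) + (1 + t) * (B + a * (1 - B)) * (A * A))
          / (A * A * (B * B))) by (field; lra).
  apply Rmult_lt_reg_r with (A * A * (B * B)); [exact HAB|].
  unfold Rdiv. rewrite Rmult_assoc, Rinv_l by lra.
  nra.
Qed.

Theorem lemma4p1 (p : nat) (hp5 : (5 <= p)%nat) (hodd : Nat.Odd p) (x : R) (hx : 2 <= x) :
  Rpower ((1 - 1 / (4 * x)) ^ 2 + 1 / (8 * x ^ 2)) (- (1 / INR p) - 1) * (1 - 1 / (4 * x))
  + Rpower ((1 + 1 / (4 * x)) ^ 2 + 1 / (8 * x ^ 2)) (- (1 / INR p) - 1) * (1 + 1 / (4 * x))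
  < 2.
Proof.
  set (t := 1 / (4 * x)).
  assert (Ht : 0 < t <= 1 / 8) by (unfold t; split; [apply Rdiv_lt_0_compat|
    apply Rmult_le_reg_r with (8 * x); [|field_simplify]]; lra).
  assert (Hp : 5 <= INR p) by (apply (le_INR 5) in hp5; simpl in hp5; lra).
  assert (Ha : 0 <= 1 / INR p <= 1 / 3) by (split; [apply Rlt_le, Rdiv_lt_0_compat|
    apply Rmult_le_reg_r with (3 * INR p); [|field_simplify]]; lra).
  replace ((1 - t) ^ 2 + 1 / (8 * x ^ 2)) with (1 - 2 * t + 3 * t ^ 2) by (unfold t; field; lra).
  replace ((1 + t) ^ 2 + 1 / (8 * x ^ 2)) with (1 + 2 * t + 3 * t ^ 2) by (unfold t; field; lra).
  eapply Rle_lt_trans; [apply Rplus_le_compat|exact (tangent_bound_lt2 t (1 / INR p) (proj1 Ht) Ha)].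
  all: apply Rpower_opp_inv_nat_sub1_le; [nra|lra].
Qed.
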